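(* Let $\mathcal{C}\subseteq\mathbb{F}_q^n$ be an MDS code with $|\mathcal{C}|=q^k\ge 2$ and minimum distance $d=n-k+1$. Then the minimum-distance graph $G(\mathcal{C})$ is connected.
   Context: $d(\cdot,\cdot)$ is Hamming distance. An $(n,M,d)_q$ code is MDS if $M=q^{n-d+1}$. The minimum-distance graph $G(\mathcal{C})$ has vertex set $\mathcal{C}$, with distinct $c_1,c_2$ adjacent iff $d(c_1,c_2)$ equals the minimum distance of $\mathcal{C}$. *)

From mathcomp Require Import all_boot all_algebra.
Set Implicit Arguments. Unset Strict Implicit. Unset Printing Implicit Defensive.

Definition hdist (F : finFieldType) (n : nat) (x y : 'rV[F]_n) : nat :=
  #|[set i : 'I_n | x ord0 i != y ord0 i]|.

(* Minimum distance of a code C: minimum Hamming distance over pairs of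
   distinct codewords (the default value n is never reached when #|C| >= 2,
   since all distances are <= n). *)
Definition mindist (F : finFieldType) (n : nat) (C : {set 'rV[F]_n}) : nat :=
  \big[minn/n]_(x in C) \big[minn/n]_(y in C | y != x) hdist x y.

Definition mdgraph (F : finFieldType) (n : nat) (C : {set 'rV[F]_n}) : rel 'rV[F]_n :=
  fun x y => [&& x \in C, y \in C, x != y & hdist x y == mindist C].

(* A graph on vertex set C is connected if any two vertices are joined by a
   path of edges (paths stay in C since edges only join vertices of C). *)
Definition md_connected (F : finFieldType) (n : nat) (C : {set 'rV[F]_n}) : Prop :=
  {in C &, forall x y, connect (mdgraph C) x y}.

(* For an MDS code with |C| = q^k and d = n - k + 1, any k coordinates form an
   information set: two codewords agreeing on k coordinates would be at
   distance at most n - k < d.  Hence, given distinct codewords x and y, which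
   agree on at most k - 1 coordinates, we can enlarge their agreement set to a
   set T of k - 1 coordinates avoiding some j with x_j <> y_j and find a
   codeword z that agrees with x on T and with y at j.  Then d(x, z) <= d, so
   x and z are adjacent, and z agrees with y on strictly more coordinates than
   x does; induction on d(x, y) connects x to y. *)
From mathcomp Require Import all_boot all_algebra.
From mathcomp Require Import zify.
Set Implicit Arguments. Unset Strict Implicit. Unset Printing Implicit Defensive.

Lemma exists_superset_card (T : finType) (A : {set T}) (j : T) m :
  j \notin A -> (#|A| <= m)%N -> (m < #|T|)%N ->
  exists B : {set T}, [/\ A \subset B, j \notin B & #|B| = m].
Proof.
move=> jA; elim: m => [|m IH] Am mT.
  by exists A; split=> //; apply/eqP; rewrite -leqn0.
have [eqAm | neAm] := eqVneq #|A| m.+1; first by exists A.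
rewrite leq_eqVlt (negbTE neAm) ltnS in Am.
have [B [AB jB cB]] := IH Am (ltnW mT).
have : (0 < #|~: (j |: B)|)%N.
  by have := cardsC (j |: B); rewrite cardsU1 jB cB; lia.
case/card_gt0P => a; rewrite !inE negb_or => /andP [aj aB].
exists (a |: B); split; first exact: subset_trans AB (subsetU1 _ _).
  by rewrite !inE negb_or eq_sym aj.
by rewrite cardsU1 aB cB.
Qed.

(* [minn] has no neutral element on [nat], so [bigD1] does not apply. *)
Lemma bigminn_le (I : eqType) (r : seq I) (P : pred I) (G : I -> nat) m x :
  x \in r -> P x -> (\big[minn/m]_(i <- r | P i) G i <= G x)%N.
Proof.
elim: r => // a r IH; rewrite inE big_cons => /predU1P [<- -> | xr Px].
  exact: geq_minl.
by case: (P a); first apply: leq_trans (geq_minr _ _) _; apply: IH.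
Qed.

Section HammingDistance.

Variables (F : finFieldType) (n : nat).
Implicit Types (x y z w : 'rV[F]_n) (C : {set 'rV[F]_n}) (S : {set 'I_n}).

Definition agree x y : {set 'I_n} := [set i | x ord0 i == y ord0 i].

Lemma in_agree x y i : (i \in agree x y) = (x ord0 i == y ord0 i).
Proof. by rewrite inE. Qed.

Lemma card_agree_hdist x y : (#|agree x y| + hdist x y)%N = n.
Proof.
rewrite -[RHS](card_ord n) -(cardsC (agree x y)); congr (_ + _).
by apply: eq_card => i; rewrite !inE.
Qed.

Lemma hdist_le_agree x y S : S \subset agree x y -> (hdist x y <= n - #|S|)%N.
Proof.
move/subset_leq_card; have := card_agree_hdist x y; lia.
Qed.

Lemma hdist_lt_agree x y z :
  agree x y \proper agree z y -> (hdist z y < hdist x y)%N.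
Proof.
move/proper_card; have := card_agree_hdist x y; have := card_agree_hdist z y.
lia.
Qed.

Lemma mindist_le C x y :
  x \in C -> y \in C -> y != x -> (mindist C <= hdist x y)%N.
Proof.
move=> xC yC yx; rewrite /mindist.
apply: leq_trans (bigminn_le _ _ (mem_index_enum x) xC) _.
by apply: bigminn_le (mem_index_enum y) _; rewrite /= yC.
Qed.

End HammingDistance.

Section MDSCode.

Variables (F : finFieldType) (n k : nat) (C : {set 'rV[F]_n}).
Hypothesis card_C : #|C| = (#|F| ^ k)%N.
Hypothesis mindist_C : mindist C = (n - k + 1)%N.

Lemma mds_information_set (S : {set 'I_n}) (w : 'rV[F]_n) :
  #|S| = k -> exists2 c, c \in C & S \subset agree c w.
Proof.
move=> cardS.
pose proj (c : 'rV[F]_n) : {ffun {i : 'I_n | i \in S} -> F} :=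
  [ffun i => c ord0 (val i)].
have proj_agree a b : proj a = proj b -> S \subset agree a b.
  move/ffunP=> eq_ab; apply/subsetP => i iS.
  by have := eq_ab (exist _ i iS); rewrite !ffunE in_agree => ->.
have proj_inj : {in C &, injective proj}.
  move=> a b aC bC /esym/proj_agree/hdist_le_agree Sba.
  apply/eqP; apply: contraT => ab.
  by have := mindist_le bC aC ab; rewrite mindist_C -cardS; lia.
have proj_onto : proj @: C = setT.
  apply/eqP; rewrite eqEcard subsetT cardsT card_ffun card_in_imset //.
  by rewrite /= card_C card_sig -cardS.
have : proj w \in proj @: C by rewrite proj_onto inE.
by case/imsetP => c cC /esym/proj_agree; exists c.
Qed.

Lemma mds_dim_le : (k <= n)%N.
Proof.
have q_gt1 : (1 < #|F|)%N.
  by apply/card_gt1P; exists 0%R, 1%R; rewrite eq_sym GRing.oner_neq0.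
rewrite -(leq_exp2l _ _ q_gt1) -card_C.
by apply: leq_trans (max_card _) _; rewrite card_mx mul1n.
Qed.

Hypothesis k_gt0 : (0 < k)%N.

Lemma mds_step x y : x \in C -> y \in C -> x != y ->
  exists2 z, mdgraph C x z & (hdist z y < hdist x y)%N.
Proof.
move=> xC yC xy.
have [j xy_j] : exists j, x ord0 j != y ord0 j.
  apply/existsP; apply: contraR xy => /existsPn eq_xy.
  by apply/eqP/rowP => i; apply/eqP; rewrite -[_ == _]negbK eq_xy.
have jA : j \notin agree x y by rewrite in_agree.
have cardA : (#|agree x y| <= k.-1)%N.
  have yx : y != x by rewrite eq_sym.
  have := card_agree_hdist x y; have := mindist_le xC yC yx.
  by rewrite mindist_C; lia.
have [|T [AT jT cardT]] := exists_superset_card jA cardA.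
  by rewrite card_ord; have := mds_dim_le; lia.
pose w : 'rV[F]_n := (\row_i if i == j then y ord0 i else x ord0 i)%R.
have [|z zC Sz] := mds_information_set w (S := j |: T).
  by rewrite cardsU1 jT cardT; lia.
have zy_j : z ord0 j = y ord0 j.
  by have := subsetP Sz j (setU11 _ _); rewrite in_agree /w mxE eqxx => /eqP.
have Txz : T \subset agree x z.
  apply/subsetP => i iT; have ij : i != j by apply: contraNneq jT => <-.
  have := subsetP Sz i (setU1r _ iT).
  by rewrite !in_agree /w mxE (negbTE ij) eq_sym.
have zx : z != x by apply: contraNneq xy_j => <-; rewrite zy_j.
exists z.
  rewrite /mdgraph xC zC eq_sym zx /= eqn_leq mindist_le //=.
  by have := hdist_le_agree Txz; rewrite mindist_C cardT; lia.
apply: hdist_lt_agree; apply/properP; split.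
  apply/subsetP => i iA; have := subsetP Txz i (subsetP AT i iA).
  by move: iA; rewrite !in_agree => /eqP -> /eqP ->.
by exists j; rewrite !in_agree ?zy_j ?eqxx.
Qed.

End MDSCode.

Theorem theorem9 (F : finFieldType) (n k : nat) (C : {set 'rV[F]_n}) :
  #|C| = (#|F| ^ k)%N ->
  (2 <= #|F| ^ k)%N ->
  mindist C = (n - k + 1)%N ->
  md_connected C.
Proof.
move=> card_C q_k_gt1 mindist_C x y xC yC.
have k_gt0 : (0 < k)%N by case: k q_k_gt1 {card_C mindist_C}.
have [m] := ubnP (hdist x y); elim: m x xC => // m IH x xC.
rewrite ltnS => dxy.
have [-> // | xy] := eqVneq x y.
have [z xz zy] := mds_step card_C mindist_C k_gt0 xC yC xy.
apply: connect_trans (connect1 xz) _.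
by apply: IH (leq_trans zy dxy); case/and4P: xz.
Qed.
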